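(* Let $G$, $\delta V$, $\rho$, $G^{BU}$, $U$ and $H=\begin{pmatrix}a&b\\c&d\end{pmatrix}$ (unitary, $abcd\neq0$, $d\in\mathbb{R}$, $\omega=-\det H$) be as in the context, and let $S$ be the scattering matrix of the facial quantum walk on $\mathbb{C}^{\delta V^{BU}}$. The vertex sets $\{x_0(f),\dots,x_{\kappa_f-1}(f)\}$, $f\in F^{ex}$, partition $\delta V^{BU}$. With respect to this partition $S$ is block diagonal, $S=\bigoplus_{f\in F^{ex}}S_f$, where, after identifying $\mathbb{C}^{\{x_0(f),\dots,x_{\kappa_f-1}(f)\}}$ with $\mathbb{C}^{\{0,\dots,\kappa_f-1\}}$ via $x_j(f)\leftrightarrow j$, $$S_f=bc\,P_f(\omega)\bigl(I_f-aP_f(\omega)\bigr)^{-1}+d\,I_f.$$ Here $I_f$ is the identity on $\mathbb{C}^{\{0,\dots,\kappa_f-1\}}$ and $(P_f(\omega)h)(j)=\omega^{\delta_{j-1}(f)}h(j-1)$, with indices taken modulo $\kappa_f$.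
   Context: Setting. $G=(V,E)$ is a finite connected simple graph and $\delta V\subseteq V$ a set of boundary vertices. To each $u\in\delta V$ a semi-infinite path (tail) is attached with origin $u$; let $\tau_u$ be the neighbour of $u$ on its tail. Let $\tilde N_u$ be the set of neighbours of $u$ in $G$, together with $\tau_u$ if $u\in\delta V$. A rotation $\rho=(\rho_u)_{u\in V}$ consists of cyclic permutations $\rho_u$ of $\tilde N_u$ of length $|\tilde N_u|$. Blow-up graph. $V^{BU}=\{(u,v):u\in V,\ v\in\tilde N_u\}$, with arcs $A^{BU}=A_{is}\sqcup A_{br}$: island arcs $(u,v)\to(u,\rho_u(v))$ and bridge arcs $(u,v)\to(v,u)$ for $u,v\in V$ adjacent in $G$. For a bridge arc $e$, $\bar e$ is its reverse. Let $\delta V^{BU}=\{(u,\tau_u):u\in\delta V\}$. To each $x\in\delta V^{BU}$ a tail is attached: incoming arcs $e^x_0,e^x_1,\dots$ with $t(e^x_0)=x$ and $t(e^x_{j+1})=o(e^x_j)$, and their reverses $\bar e^x_j$ (outgoing); $A_{tl}$ is the set of all tail arcs. Each $x\in V^{BU}$ has exactly one incoming and one outgoing island arc, and one further incoming and one further outgoing arc (a bridge and its reverse, or $e^x_0$ and $\bar e^x_0$ if $x\in\delta V^{BU}$). Walk. $U$ acts on $\mathbb{C}^{A^{BU}\cup A_{tl}}$ by $(U\Psi)(e^x_j)=\Psi(e^x_{j+1})$ and $(U\Psi)(\bar e^x_{j+1})=\Psi(\bar e^x_j)$. At every $x\in V^{BU}$, with incoming island arc $e^{is}_+$, other incoming arc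 $e^{br}_+$, outgoing island arc $e^{is}_-$ and other outgoing arc $e^{br}_-$, one has $\bigl((U\Psi)(e^{is}_-),(U\Psi)(e^{br}_-)\bigr)^{T}=H\bigl(\Psi(e^{is}_+),\Psi(e^{br}_+)\bigr)^{T}$. Scattering matrix. Given an inflow $\alpha\in\mathbb{C}^{\delta V^{BU}}$, set $\Psi_0(e^x_j)=\alpha(x)$ for all $x$ and $j$, and $\Psi_0=0$ elsewhere. Then $U^n\Psi_0$ converges pointwise to some $\Psi_\infty$ with $U\Psi_\infty=\Psi_\infty$ (this is a known result). The outflow is $\beta(x)=\Psi_\infty(\bar e^x_0)$. The scattering matrix $S$ is the matrix with $\beta=S\alpha$ for every $\alpha$; its existence is known. Facial walks. Define a bijection $\sigma$ of $A^{BU}$ as follows. A bridge arc $e$ is sent to the island arc starting at $t(e)$. An island arc ending at $x\notin\delta V^{BU}$ is sent to the bridge arc starting at $x$. An island arc ending at $x\in\delta V^{BU}$ is sent to the island arc starting at $x$. The facial closed walks are the cycles of $\sigma$. A facial walk is external if it passes through a vertex of $\delta V^{BU}$, and internal otherwise; $F^{ex}$ and $F^{in}$ denote the corresponding sets. For $f\in F^{ex}$, let $x_0(f),\dots,x_{\kappa_f-1}(f)$ be the vertices of $\delta V^{BU}$ visited by $f$, in cyclic order of traversal. Let $\delta_m(f)$ be the number of bridge arcs traversed by $f$ between $x_m(f)$ and $x_{m+1}(f)$ (indices mod $\kappa_f$). *)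

From HB Require Import structures.
From mathcomp Require Import all_boot all_order all_algebra.
From mathcomp Require Import fingroup perm.
From mathcomp Require Import complex reals.
Set Implicit Arguments.
Unset Strict Implicit.
Unset Printing Implicit Defensive.
Import Order.TTheory GRing.Theory Num.Theory.
Local Open Scope ring_scope.

Section BlowUp.
Variables (V : finType) (adj : rel V) (dV : {set V}).

Definition simple_connected_graph :=
  [/\ symmetric adj, irreflexive adj & forall x y : V, connect adj x y].

(* Blow-up vertices.  (u, v) with v a G-neighbour of u is an element of BR;
   (u, tau_u) with u in dV is represented by u : BD.  So V^BU = BR + BD and
   delta V^BU = BD. *)
Definition BR := {p : V * V | adj p.1 p.2}.
Definition BD := {u : V | u \in dV}.
Definition BV := (BR + BD)%type.

Definition owner (x : BV) : V :=
  match x with inl p => (val p).1 | inr u => val u end.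

(* (u, v) |-> (v, u)  (default branch never used when adj is symmetric) *)
Definition swap (p : BR) : BR := insubd p ((val p).2, (val p).1).

(* A rotation: a permutation of V^BU acting inside each fibre
   {(u, v) : v in N~_u}, and on each fibre as a single cycle
   (a cyclic permutation of N~_u of length |N~_u|). *)
Definition rotation (rho : {perm BV}) :=
  (forall x, owner (rho x) = owner x) /\
  (forall x y, owner x = owner y -> fconnect rho x y).

(* Arcs of the blow-up graph A^BU = A_is + A_br:
   inl x = island arc  x -> rho x ;  inr p = bridge arc  p -> swap p. *)
Definition barc := (BV + BR)%type.

(* all arcs, including the tails: TIn x j = e^x_j (incoming, t(e^x_0) = x),
   TOut x j = reverse of e^x_j (outgoing). *)
Inductive arc := Ab of barc | TIn of BD & nat | TOut of BD & nat.

Variable rho : {perm BV}.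

Definition sigma (e : barc) : barc :=
  match e with
  | inr p => inl (inl (swap p))
  | inl y => match rho y with inl q => inr q | inr u => inl (inr u) end
  end.

Variable R : realType.
Variables (a b c d : R[i]).

Definition Hmx : 'M[R[i]]_2 :=
  \matrix_(i < 2, j < 2)
    if i == 0 then (if j == 0 then a else b) else (if j == 0 then c else d).

Definition unitary2 (H : 'M[R[i]]_2) :=
  H *m (map_mx (@conjc R) H)^T = 1%:M.

(* the non-island incoming arc at a blow-up vertex *)
Definition in_other (x : BV) : arc :=
  match x with inl p => Ab (inr (swap p)) | inr u => TIn u 0 end.

Definition Uwalk (Psi : arc -> R[i]) : arc -> R[i] := fun e =>
  match e with
  | Ab (inl y) => a * Psi (Ab (inl ((rho^-1)%g y))) + b * Psi (in_other y)
  | Ab (inr p) => c * Psi (Ab (inl ((rho^-1)%g (inl p)))) + d * Psi (in_other (inl p))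
  | TIn u j => Psi (TIn u j.+1)
  | TOut u 0 => c * Psi (Ab (inl ((rho^-1)%g (inr u)))) + d * Psi (in_other (inr u))
  | TOut u j.+1 => Psi (TOut u j)
  end.

Definition Psi0 (alpha : BD -> R[i]) : arc -> R[i] := fun e =>
  match e with TIn u _ => alpha u | _ => 0 end.

Definition outflow_at (alpha : BD -> R[i]) (x : BD) (n : nat) : R[i] :=
  iter n Uwalk (Psi0 alpha) (TOut x 0).

End BlowUp.

Definition cvgC (R : realType) (s : nat -> R[i]) (l : R[i]) :=
  forall e : R, 0 < e -> exists N, forall n, (N <= n)%N -> `|s n - l| < (e%:C)%C.

Section Faces.
Variables (V : finType) (adj : rel V) (dV : {set V}) (rho : {perm BV adj dV}).

Definition bdIsl (e : barc adj dV) : option (BD dV) :=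
  match e with inl (inr u) => Some u | _ => None end.
Definition isBr (e : barc adj dV) : bool := if e is inr _ then true else false.

(* the facial closed walk (a cycle of sigma) starting with the island arc
   leaving the boundary vertex u0 *)
Definition face (u0 : BD dV) : seq (barc adj dV) :=
  orbit (sigma rho) (inl (inr u0)).

(* x_0(f), ..., x_(kappa_f - 1)(f), with x_0(f) = u0, in order of traversal *)
Definition bverts (u0 : BD dV) : seq (BD dV) := pmap bdIsl (face u0).
Definition kappa (u0 : BD dV) : nat := size (bverts u0).

Definition bpos (u0 : BD dV) : seq nat :=
  [seq i <- iota 0 (size (face u0)) | bdIsl (nth (inl (inr u0)) (face u0) i) != None].

(* delta_m(f): number of bridge arcs traversed between x_m and x_(m+1) *)
Definition delta (u0 : BD dV) (m : nat) : nat :=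
  count isBr (drop (nth 0 (bpos u0) m)
                   (take (nth (size (face u0)) (bpos u0) m.+1) (face u0))).

Variable R : realType.

Definition Pf (u0 : BD dV) (om : R[i]) : 'M[R[i]]_(kappa u0) :=
  \matrix_(j, i)
    let jm1 := ((j + (kappa u0).-1) %% kappa u0)%N in
    if (i : nat) == jm1 then om ^+ delta u0 jm1 else 0.

Definition Sf (u0 : BD dV) (a b c d om : R[i]) : 'M[R[i]]_(kappa u0) :=
  (b * c) *: (Pf u0 om *m invmx (1%:M - a *: Pf u0 om)) + d%:M.

End Faces.

(* Restricted to the arcs of the blow-up graph, with the inflow entering at the
   boundary, one step of the walk is an isometry up to the outflow, because H is
   unitary.  Hence the homogeneous step loses a summable amount of energy through
   the outflow, so the outflow of U^n Psi_0 converges to that of any stationary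
   state, and a stationary state exists by the Fredholm alternative.
   For a stationary state, the amplitude on an island arc of a facial walk is
   carried unchanged to the next bridge and multiplied by omega across it: this
   is stationarity on both arcs of the bridge together with omega (1 - d^2) = bc
   and a (1 - d^2) = -bcd.  So the amplitudes h_j entering the boundary vertices
   x_j(f) satisfy h = P_f(omega) (a h + b alpha), and the outflow c h + d alpha
   is S_f alpha.  Finally I_f - a P_f(omega) is invertible because |a| < 1 and
   P_f(omega) is monomial with unimodular entries. *)

From HB Require Import structures.
From mathcomp Require Import all_boot all_order all_algebra.
From mathcomp Require Import fingroup perm.
From mathcomp Require Import complex reals boolp.
From mathcomp Require Import ring zify.
Import Order.TTheory GRing.Theory Num.Theory.
Local Open Scope ring_scope.

Set Implicit Arguments.
Unset Strict Implicit.
Unset Printing Implicit Defensive.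

Lemma nonneg_bounded_sums_vanish (R : archiRealFieldType) (s : nat -> R) (M : R) :
  (forall n, 0 <= s n) -> (forall n, \sum_(j < n) s j <= M) ->
  forall e, 0 < e -> exists N, forall n, (N <= n)%N -> s n < e.
Proof.
move=> s_ge0 s_bnd e e_gt0; apply: contrapT => no_tail.
have often N : exists2 n, (N <= n)%N & e <= s n.
  apply: contrapT => hN; apply: no_tail; exists N => n leNn.
  by rewrite ltNge; apply/negP => hn; apply: hN; exists n.
have sum_mono n k : \sum_(j < n) s j <= \sum_(j < n + k) s j.
  elim: k => [|k IHk]; first by rewrite addn0.
  by rewrite addnS big_ord_recr /= (le_trans IHk) // lerDl.
have sum_large k : exists n, k%:R * e <= \sum_(j < n) s j.
  elim: k => [|k [n IHk]]; first by exists 0%N; rewrite mul0r big_ord0.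
  have [n' len' en'] := often n.
  exists n'.+1; rewrite big_ord_recr /= mulrSr mulrDl mul1r lerD //.
  by rewrite (le_trans IHk) // -(subnKC len') sum_mono.
have M_ge0 : 0 <= M by rewrite (le_trans _ (s_bnd 0%N)) // big_ord0.
have [n hn] := sum_large (Num.Def.archi_bound (M / e)).
have := archi_boundP (divr_ge0 M_ge0 (ltW e_gt0)).
rewrite ltr_pdivrMr // => hM.
by have := le_lt_trans (s_bnd n) hM; rewrite ltNge hn.
Qed.

Section Dot.
Variables (R : rcfType) (T : finType).
Local Notation C := R[i].

Definition dot (f g : T -> C) : C := \sum_t f t * (g t)^*.

Lemma dot_ge0 (f : T -> C) : 0 <= dot f f.
Proof. by apply: sumr_ge0 => t _; rewrite -normCK exprn_ge0. Qed.

Lemma dot_eq0 (f : T -> C) : dot f f = 0 -> f =1 (fun=> 0).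
Proof.
move=> /eqP f0 t; apply/eqP; move: f0.
rewrite psumr_eq0 => [/allP/(_ t (mem_index_enum t))|t' _]; last first.
  by rewrite -normCK exprn_ge0.
by rewrite -normCK expf_eq0 /= normr_eq0.
Qed.

Lemma dot0r (f : T -> C) : dot f (fun=> 0) = 0.
Proof. by rewrite /dot big1 // => t _; rewrite rmorph0 mulr0. Qed.

Lemma dot0l (f : T -> C) : dot (fun=> 0) f = 0.
Proof. by rewrite /dot big1 // => t _; rewrite mul0r. Qed.

Lemma conj_dot (f g : T -> C) : (dot f g)^* = dot g f.
Proof.
rewrite /dot rmorph_sum; apply: eq_bigr => t _.
by rewrite rmorphM /= conjCK mulrC.
Qed.

Lemma dotBB (f g : T -> C) :
  dot (f \- g) (f \- g) = dot f f - dot f g - dot g f + dot g g.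
Proof.
rewrite /dot -!sumrB -big_split /=; apply: eq_bigr => t _.
by rewrite rmorphB /=; ring.
Qed.

Lemma normCK_le_dot (f : T -> C) t : `|f t| ^+ 2 <= dot f f.
Proof.
rewrite /dot (bigD1 t) //= normCK lerDl.
by apply: sumr_ge0 => t' _; rewrite -normCK exprn_ge0.
Qed.

End Dot.

Lemma dot_sum (R : rcfType) (T1 T2 : finType) (f g : (T1 + T2)%type -> R[i]) :
  dot f g = dot (f \o inl) (g \o inl) + dot (f \o inr) (g \o inr).
Proof. exact: big_sumType. Qed.

Section SomePositions.
Local Open Scope nat_scope.
Variables (T U : eqType) (g : T -> option U) (x0 : T) (s : seq T).

Definition some_pos := [seq i <- iota 0 (size s) | g (nth x0 s i) != None].

Lemma map_Some_pmap : map Some (pmap g s) = map (fun i => g (nth x0 s i)) some_pos.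
Proof.
rewrite pmapS_filter -[in LHS](mkseq_nth x0 s) /mkseq filter_map -map_comp.
by congr map; apply: eq_filter => i /=; case: (g _).
Qed.

Lemma size_some_pos : size some_pos = size (pmap g s).
Proof. by rewrite -(size_map Some (pmap g s)) map_Some_pmap size_map. Qed.

Lemma nth_some_pos y0 m : m < size some_pos ->
  g (nth x0 s (nth 0 some_pos m)) = Some (nth y0 (pmap g s) m).
Proof.
move=> ltm; have := congr1 (nth None ^~ m) map_Some_pmap.
by rewrite /= !(nth_map y0) ?(nth_map 0) // -size_some_pos.
Qed.

Lemma mem_some_pos k : (k \in some_pos) = (k < size s) && (g (nth x0 s k) != None).
Proof. by rewrite mem_filter mem_iota add0n andbC. Qed.

Lemma some_pos_lt m : m < size some_pos -> nth 0 some_pos m < size s.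
Proof. by move=> ltm; have := mem_nth 0 ltm; rewrite mem_some_pos => /andP []. Qed.

Lemma sorted_some_pos : sorted ltn some_pos.
Proof. exact: (sorted_filter ltn_trans) (iota_ltn_sorted 0 _). Qed.

Lemma nth_some_pos_le m : nth (size s) some_pos m <= size s.
Proof.
have [ltm|] := ltnP m (size some_pos); last by move/(nth_default _) ->.
by rewrite (set_nth_default 0) // ltnW // some_pos_lt.
Qed.

Lemma nth_some_pos_ltS m : m < size some_pos ->
  nth 0 some_pos m < nth (size s) some_pos m.+1.
Proof.
move=> ltm; have [ltm1|] := ltnP m.+1 (size some_pos).
  by rewrite (set_nth_default 0) // (sorted_ltn_nth ltn_trans 0 sorted_some_pos).
by move/(nth_default _) ->; rewrite some_pos_lt.
Qed.

Lemma some_pos_gap m k : m < size some_pos ->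
  nth 0 some_pos m < k < nth (size s) some_pos m.+1 -> g (nth x0 s k) = None.
Proof.
move=> ltm /andP [lo hi]; case gk: (g _) => [u|] //; exfalso.
have : k \in some_pos by rewrite mem_some_pos gk (leq_trans hi) ?nth_some_pos_le.
rewrite -index_mem; set i := index k some_pos => lti.
have k_def : nth 0 some_pos i = k by rewrite nth_index // -index_mem.
have mono := sorted_leq_nth leq_trans leqnn 0 (sub_sorted (@ltnW) sorted_some_pos).
have [lei|ltm'] := leqP i m.
  by move: lo; rewrite -k_def ltnNge mono.
have ltm1 : m.+1 < size some_pos by apply: leq_trans lti.
by move: hi; rewrite (set_nth_default 0) // -k_def ltnNge mono.
Qed.

End SomePositions.

Lemma val_ord_pred n (i : 'I_n) : ord_pred i = ((i + n.-1) %% n)%N :> nat.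
Proof. by case: n i => [[]|n] i //=; rewrite addnS. Qed.

Section MonomialContraction.
Variables (C : numFieldType) (n : nat) (P : 'M[C]_n) (g : 'I_n -> 'I_n) (a : C).
Hypothesis a_lt1 : `|a| < 1.
Hypothesis P_monomial : forall j i, i != g j -> P j i = 0.
Hypothesis P_le1 : forall j, `|P j (g j)| <= 1.

Lemma mulmx_monomial (w : 'cV[C]_n) j : (P *m w) j 0 = P j (g j) * w (g j) 0.
Proof.
rewrite mxE (bigD1 (g j)) //= big1 ?addr0 // => i /P_monomial ->.
by rewrite mul0r.
Qed.

(* Compare with the entry of [w] of largest modulus. *)
Lemma monomial_contraction_fix (w : 'cV[C]_n) : w = a *: (P *m w) -> w = 0.
Proof.
move=> w_fix; apply/matrixP => j k; rewrite (ord1 k) mxE.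
case: (@real_arg_maxP _ _ j predT (fun l => `|w l 0|) isT) => [l _|jm _ w_max].
  exact: normr_real.
suff w_jm0 : `|w jm 0| <= 0.
  by apply/eqP; rewrite -normr_le0 (le_trans (w_max j isT)).
have : `|w jm 0| <= `|a| * `|w jm 0|.
  rewrite {1}w_fix mxE mulmx_monomial !normrM.
  apply: ler_pM; rewrite ?mulr_ge0 ?normr_ge0 //.
  by rewrite -[leRHS]mul1r; apply: ler_pM; rewrite ?normr_ge0 ?P_le1 //; exact: w_max.
move=> le_w; have : (1 - `|a|) * `|w jm 0| <= 0 by rewrite mulrBl mul1r subr_le0.
by rewrite pmulr_rle0 // subr_gt0.
Qed.

Lemma unitmx_1_sub_monomial : (1%:M - a *: P) \in unitmx.
Proof.
rewrite -unitmx_tr -row_free_unit; apply: inj_row_free => v.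
rewrite -[v]trmxK -trmx_mul => /eqP; rewrite trmx_eq0 => /eqP.
rewrite mulmxBl mul1mx => /eqP; rewrite subr_eq0 -scalemxAl => /eqP w_fix.
by rewrite (monomial_contraction_fix w_fix) trmx0.
Qed.

End MonomialContraction.

Lemma scattering_mx (F : fieldType) n (P : 'M[F]_n) (a b c d : F) (h al : 'cV[F]_n) :
  (1%:M - a *: P) \in unitmx -> h = P *m (a *: h + b *: al) ->
  ((b * c) *: (P *m invmx (1%:M - a *: P)) + d%:M) *m al = c *: h + d *: al.
Proof.
set Q := 1%:M - a *: P => Q_unit h_def.
have Qh : Q *m h = b *: (P *m al).
  rewrite /Q mulmxBl mul1mx -scalemxAl {1}h_def mulmxDr -!scalemxAr.
  by rewrite addrAC subrr add0r.
have PQ : P *m Q = Q *m P.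
  by rewrite /Q mulmxBl mulmxBr mul1mx mulmx1 -scalemxAl -scalemxAr.
have PQinv : P *m invmx Q = invmx Q *m P.
  by rewrite -[RHS](mulmxK Q_unit) -[invmx Q *m P *m Q]mulmxA PQ mulKmx.
rewrite mulmxDl mul_scalar_mx -scalemxAl PQinv -mulmxA mulrC -scalerA.
by rewrite scalemxAr -Qh mulKmx.
Qed.

Section Coin.
Variables (R : realType) (a b c d : R[i]).
Hypothesis unitaryH : unitary2 (Hmx a b c d).

Lemma det_Hmx : \det (Hmx a b c d) = a * d - b * c.
Proof.
rewrite (expand_det_row _ 0) !big_ord_recl big_ord0 /cofactor !det_mx11 !mxE /=.
by rewrite !expr0 !expr1; ring.
Qed.

Lemma unitary2_cols :
  [/\ a * a^* + c * c^* = 1, b * b^* + d * d^* = 1 & a * b^* + c * d^* = 0].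
Proof.
have /matrixP HtH := mulmx1C unitaryH.
have := HtH 0 0; have := HtH 1 1; have := HtH 1 0.
rewrite !mxE !big_ord_recl !big_ord0 !mxE /= !addr0.
by move=> e10 e11 e00; split; rewrite mulrC [X in _ + X]mulrC.
Qed.

Lemma coin_isometry (p q p' q' : R[i]) :
  (a * p + b * q) * (a * p' + b * q')^* + (c * p + d * q) * (c * p' + d * q')^*
  = p * p'^* + q * q'^*.
Proof.
have [Ha Hb Hab] := unitary2_cols.
have Hba : b * a^* + d * c^* = 0.
  have := congr1 Num.conj Hab; rewrite rmorphD !rmorphM /= !conjCK rmorph0.
  by rewrite [b * _]mulrC [d * _]mulrC.
rewrite !rmorphD !rmorphM /=.
transitivity (p * p'^* * (a * a^* + c * c^*) + q * q'^* * (b * b^* + d * d^*)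
  + p * q'^* * (a * b^* + c * d^*) + q * p'^* * (b * a^* + d * c^*)); first by ring.
by rewrite Ha Hb Hab Hba !mulr1 !mulr0 !addr0.
Qed.

Lemma norm_det_Hmx : `|\det (Hmx a b c d)| = 1.
Proof.
have := congr1 determinant unitaryH.
rewrite det_mulmx det_tr det_map_mx det1 /= -normCK => /eqP.
by rewrite sqrp_eq1 // => /eqP.
Qed.

Lemma norm_a_lt1 : c != 0 -> `|a| < 1.
Proof.
have [Ha _ _] := unitary2_cols; move=> c_neq0.
rewrite -(expr_lt1 (_ : 0 < 2)%N) // normCK -Ha ltrDl -normCK.
by rewrite exprn_gt0 // normr_gt0.
Qed.

Hypothesis d_real : d \is Num.real.

Lemma one_sub_d2 : 1 - d ^+ 2 = b * b^*.
Proof. by have [_ Hb _] := unitary2_cols; rewrite -Hb (conj_Creal d_real) expr2 addrK. Qed.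

Lemma a_mul_one_sub_d2 : a * (1 - d ^+ 2) = - (b * c * d).
Proof.
have [_ _ Hab] := unitary2_cols.
have ab : a * b^* = - (c * d).
  by rewrite -(conj_Creal d_real); apply/eqP; rewrite -addr_eq0 Hab.
by rewrite one_sub_d2 mulrCA ab; ring.
Qed.

Lemma om_mul_one_sub_d2 : - \det (Hmx a b c d) * (1 - d ^+ 2) = b * c.
Proof.
rewrite det_Hmx; transitivity (b * c - d * (a * (1 - d ^+ 2) + b * c * d)); first ring.
by rewrite a_mul_one_sub_d2 addNr mulr0 subr0.
Qed.

End Coin.

Section Swap.
Variables (V : finType) (adj : rel V).
Hypothesis adj_sym : symmetric adj.

Lemma swapK : involutive (@swap V adj).
Proof.
have swap_val p : val (@swap V adj p) = ((val p).2, (val p).1).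
  by rewrite /swap insubdK // unfold_in /= adj_sym; exact: (valP p).
by move=> p; apply: val_inj; rewrite !swap_val; case: (val p).
Qed.

Lemma swap_inj : injective (@swap V adj).
Proof. exact: can_inj swapK. Qed.

End Swap.

Section Walk.
Variables (R : realType) (V : finType) (adj : rel V) (dV : {set V}).
Variables (rho : {perm BV adj dV}) (a b c d : R[i]).
Hypothesis adj_sym : symmetric adj.
Hypothesis unitaryH : unitary2 (Hmx a b c d).
Local Notation C := R[i].
Local Notation E := (barc adj dV).
Local Notation BDt := (BD dV).

(* A state is recorded on the arcs of the blow-up graph only: the amplitude
   entering through the tail of a boundary vertex is the inflow [al]. *)
Definition isl_in (phi : E -> C) (x : BV adj dV) : C := phi (inl (rho^-1 x)%g).

Definition other_in (phi : E -> C) (al : BDt -> C) (x : BV adj dV) : C :=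
  match x with inl p => phi (inr (swap p)) | inr u => al u end.

Definition step (phi : E -> C) (al : BDt -> C) (e : E) : C :=
  match e with
  | inl y => a * isl_in phi y + b * other_in phi al y
  | inr p => c * isl_in phi (inl p) + d * other_in phi al (inl p)
  end.

Definition out_step (phi : E -> C) (al : BDt -> C) (u : BDt) : C :=
  c * isl_in phi (inr u) + d * al u.

Lemma step_isometry (phi psi : E -> C) (al be : BDt -> C) :
  dot (step phi al) (step psi be) + dot (out_step phi al) (out_step psi be)
  = dot phi psi + dot al be.
Proof.
pose local (f : E -> C) g x := (a * isl_in f x + b * other_in f g x,
                                c * isl_in f x + d * other_in f g x).
transitivity (\sum_x ((local phi al x).1 * ((local psi be x).1)^*
                     + (local phi al x).2 * ((local psi be x).2)^*)).
  by rewrite big_split /= dot_sum [X in _ = _ + X]big_sumType addrA.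
transitivity (\sum_x (isl_in phi x * (isl_in psi x)^*
                     + other_in phi al x * (other_in psi be x)^*)).
  by apply: eq_bigr => x _; rewrite /= (coin_isometry unitaryH).
rewrite big_split /= dot_sum -addrA; congr (_ + _).
  rewrite (reindex_inj (@perm_inj _ rho)) /=.
  by apply: eq_bigr => x _; rewrite /isl_in permK.
rewrite big_sumType /= (reindex_inj (swap_inj adj_sym)) /=.
by congr (_ + _); apply: eq_bigr => p _; rewrite swapK.
Qed.

Definition hstep (v : E -> C) : E -> C := step v (fun=> 0).
Definition hout (v : E -> C) : BDt -> C := out_step v (fun=> 0).

Lemma step_sub (phi psi : E -> C) (al : BDt -> C) :
  step phi al \- step psi al = hstep (phi \- psi).
Proof. by apply: funext => -[[p|u]|p]; rewrite /= /isl_in /= ?mulr0; ring. Qed.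

Lemma step_split (phi : E -> C) (al : BDt -> C) :
  step phi al = hstep phi \+ step (fun=> 0) al.
Proof. by apply: funext => -[[p|u]|p]; rewrite /= /isl_in /= ?mulr0; ring. Qed.

Lemma out_step_sub (phi psi : E -> C) (al : BDt -> C) :
  out_step phi al \- out_step psi al = hout (phi \- psi).
Proof. by apply: funext => u; rewrite /= /hout /out_step /isl_in /= mulr0; ring. Qed.

Lemma hstep_energy (v : E -> C) :
  dot (hstep v) (hstep v) + dot (hout v) (hout v) = dot v v.
Proof. by rewrite step_isometry dot0r addr0. Qed.

Lemma hout_energy_sum (v : E -> C) n :
  \sum_(j < n) dot (hout (iter j hstep v)) (hout (iter j hstep v))
    + dot (iter n hstep v) (iter n hstep v) = dot v v.
Proof.
elim: n => [|n IHn]; first by rewrite big_ord0 add0r.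
by rewrite big_ord_recr /= -addrA [X in _ + X]addrC hstep_energy.
Qed.

Lemma hout_iter_vanishes (v : E -> C) u (e : R) : 0 < e ->
  exists N, forall n, (N <= n)%N -> `|hout (iter n hstep v) u| < (e%:C)%C.
Proof.
move=> e_gt0.
have realC_ge0 (z : C) : 0 <= z -> z = ((complex.Re z)%:C)%C.
  by case: z => x y /andP [/eqP /= -> _].
pose s j := complex.Re (dot (hout (iter j hstep v)) (hout (iter j hstep v))).
have sE j : dot (hout (iter j hstep v)) (hout (iter j hstep v)) = ((s j)%:C)%C.
  exact/realC_ge0/dot_ge0.
have s_ge0 j : 0 <= s j by rewrite -lecR -sE dot_ge0.
have s_bnd n : \sum_(j < n) s j <= complex.Re (dot v v).
  rewrite -lecR -realC_ge0 ?dot_ge0 // -(hout_energy_sum v n) rmorph_sum /=.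
  by under eq_bigr do rewrite -sE; rewrite lerDl dot_ge0.
have [N HN] := nonneg_bounded_sums_vanish s_ge0 s_bnd (mulr_gt0 e_gt0 e_gt0).
exists N => n /HN; rewrite -ltcR rmorphM -sE -expr2 => hn.
rewrite -(ltr_pXn2r (_ : 0 < 2)%N) ?qualifE /= ?normr_ge0 ?lecR ?(ltW e_gt0) //.
exact: le_lt_trans (normCK_le_dot _ u) hn.
Qed.

End Walk.

Section Stationary.
Variables (R : realType) (V : finType) (adj : rel V) (dV : {set V}).
Variables (rho : {perm BV adj dV}) (a b c d : R[i]).
Hypothesis adj_sym : symmetric adj.
Hypothesis unitaryH : unitary2 (Hmx a b c d).
Local Notation C := R[i].
Local Notation E := (barc adj dV).
Local Notation BDt := (BD dV).
Local Notation step := (step rho a b c d).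
Local Notation hstep := (hstep rho a b c d).
Local Notation hout := (hout rho c d).
Local Notation n := #|{: E}|.

Definition indicator_arc (e' : E) : E -> C := fun e => (e == e')%:R.

Lemma hstep_expand (f : E -> C) e : hstep f e = \sum_e' f e' * hstep (indicator_arc e') e.
Proof.
have sum_indicator x : \sum_e' f e' * indicator_arc e' x = f x.
  rewrite (bigD1 x) //= /indicator_arc eqxx mulr1 big1 ?addr0 // => e' /negbTE ne'x.
  by rewrite eq_sym ne'x mulr0.
case: e => [[p|u]|p] /=; rewrite /isl_in /= ?mulr0 ?addr0;
  under eq_bigr do rewrite ?mulr0 ?addr0 ?mulrDr mulrCA ?[f _ * (_ * _)]mulrCA;
  by rewrite ?big_split /= -!mulr_sumr !sum_indicator.
Qed.

Lemma sum_enum_val (F : E -> C) : \sum_e F e = \sum_(i < n) F (enum_val i).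
Proof. by rewrite -big_enum_val. Qed.

Definition rowv (f : E -> C) : 'rV[C]_n := \row_i f (enum_val i).
Definition hstep_mx : 'M[C]_n := \matrix_(i, j) hstep (indicator_arc (enum_val i)) (enum_val j).

Lemma rowv_inj : injective rowv.
Proof.
move=> f g /rowP fg; apply: funext => e.
by have := fg (enum_rank e); rewrite !mxE enum_rankK.
Qed.

Lemma rowvB (f g : E -> C) : rowv (f \- g) = rowv f - rowv g.
Proof. by apply/rowP => i; rewrite !mxE. Qed.

Lemma rowv_hstep_mx (f : E -> C) : rowv f *m hstep_mx = rowv (hstep f).
Proof.
apply/rowP => j; rewrite !mxE hstep_expand sum_enum_val.
by apply: eq_bigr => i _; rewrite !mxE.
Qed.

Lemma dot_mx (f : E -> C) (K : 'M[C]_n) k :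
  dot f (fun e => (K (enum_rank e) k)^*) = (rowv f *m K) 0 k.
Proof.
rewrite /dot mxE sum_enum_val; apply: eq_bigr => i _.
by rewrite conjCK enum_valK mxE.
Qed.

Lemma adjoint_fixed (z : E -> C) : (forall psi, dot (hstep psi) z = dot psi z) ->
  hstep z = z /\ hout z = (fun=> 0).
Proof.
move=> z_adj.
have dist : dot (hstep z \- z) (hstep z \- z) + dot (hout z) (hout z) = 0.
  rewrite dotBB (z_adj z) -[dot z (hstep z)]conj_dot (z_adj z) conj_dot.
  by rewrite -[in X in _ - X](hstep_energy rho adj_sym unitaryH z); ring.
move/eqP: dist; rewrite paddr_eq0 ?dot_ge0 // => /andP [/eqP/dot_eq0 fix0 /eqP/dot_eq0 out0].
split; apply: funext => x; last exact: out0.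
by apply/eqP; rewrite -subr_eq0; apply/eqP/fix0.
Qed.

Lemma inflow_orthogonal (al : BDt -> C) (z : E -> C) :
  hstep z = z -> hout z = (fun=> 0) -> dot (step (fun=> 0) al) z = 0.
Proof.
move=> z_fix z_out; have := step_isometry rho adj_sym unitaryH (fun=> 0) z al (fun=> 0).
by rewrite -/(hstep z) -/(hout z) z_fix z_out !dot0r dot0l !addr0.
Qed.

(* Fredholm alternative: the inflow term is orthogonal to every fixed vector
   of the adjoint of [hstep_mx], hence lies in the range of [1 - hstep_mx]. *)
Lemma stationary_exists (al : BDt -> C) : exists phi : E -> C, step phi al = phi.
Proof.
have inflow_range : (rowv (step (fun=> 0) al) <= 1%:M - hstep_mx)%MS.
  rewrite submxE; apply/eqP/rowP => k; rewrite [RHS]mxE.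
  set K := cokermx _.
  have K_fix : hstep_mx *m K = K.
    by apply/eqP; rewrite eq_sym -subr_eq0 -{1}[K]mul1mx -mulmxBl mulmx_coker.
  pose z e := (K (enum_rank e) k)^*.
  have z_adj psi : dot (hstep psi) z = dot psi z.
    by rewrite !dot_mx -rowv_hstep_mx -mulmxA K_fix.
  have [z_fix z_out] := adjoint_fixed z_adj.
  by rewrite -dot_mx inflow_orthogonal.
have [D defD] := submxP inflow_range.
pose phi e := D 0 (enum_rank e).
have rowv_phi : rowv phi = D by apply/rowP => i; rewrite mxE /phi enum_valK.
exists phi; rewrite step_split.
have -> : step (fun=> 0) al = phi \- hstep phi.
  by apply: rowv_inj; rewrite defD rowvB -rowv_hstep_mx rowv_phi mulmxBr mulmx1.
by apply: funext => e /=; rewrite addrC subrK.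
Qed.

End Stationary.

Section Convergence.
Variables (R : realType) (V : finType) (adj : rel V) (dV : {set V}).
Variables (rho : {perm BV adj dV}) (a b c d : R[i]).
Hypothesis adj_sym : symmetric adj.
Hypothesis unitaryH : unitary2 (Hmx a b c d).
Variable al : BD dV -> R[i].
Local Notation E := (barc adj dV).
Local Notation U := (Uwalk rho a b c d).
Local Notation step := (step rho a b c d).
Local Notation hstep := (hstep rho a b c d).

Definition state n : E -> R[i] := fun e => iter n U (Psi0 al) (Ab e).

Lemma iter_Uwalk_TIn n u j : iter n U (Psi0 al) (@TIn _ adj _ u j) = al u.
Proof. by elim: n j => [|n IHn] j //=; rewrite IHn. Qed.

Lemma stateS n : state n.+1 = step (state n) al.
Proof. by apply: funext => -[[p|u]|p]; rewrite /state /= ?iter_Uwalk_TIn. Qed.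

Lemma outflow_atS x n : outflow_at rho a b c d al x n.+1 = out_step rho c d (state n) al x.
Proof. by rewrite /outflow_at iterS /= iter_Uwalk_TIn. Qed.

(* The deviation from a stationary state evolves under the homogeneous step,
   whose leak tends to zero. *)
Lemma outflow_at_cvg (phi : E -> R[i]) : step phi al = phi ->
  forall x, cvgC (outflow_at rho a b c d al x) (out_step rho c d phi al x).
Proof.
move=> phi_stat x.
have state_dev n : state n \- phi = iter n hstep (state 0 \- phi).
  by elim: n => [|n /= <-] //; rewrite stateS -{1}phi_stat step_sub.
move=> e e_gt0.
have [N HN] := hout_iter_vanishes rho adj_sym unitaryH (state 0 \- phi) x e_gt0.
exists N.+1 => -[|n] // /HN.
by rewrite -state_dev -(out_step_sub rho c d _ _ al) /= outflow_atS.
Qed.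

End Convergence.

Definition bd_arc (V : finType) (adj : rel V) (dV : {set V}) (u : BD dV) :
  barc adj dV := inl (inr u).
Arguments bd_arc {V adj dV} u.

Section Faces.
Local Open Scope nat_scope.
Variables (V : finType) (adj : rel V) (dV : {set V}) (rho : {perm BV adj dV}).
Hypothesis adj_sym : symmetric adj.
Local Notation E := (barc adj dV).
Local Notation sigma := (sigma rho).
Local Notation face := (face rho).
Local Notation bverts := (bverts rho).
Local Notation kappa := (kappa rho).
Local Notation bpos := (bpos rho).

Lemma sigma_inj : injective sigma.
Proof.
move=> [y1|p1] [y2|p2] /=.
- move=> eq_img; congr inl; apply: (@perm_inj _ rho); move: eq_img.
  by case: (rho y1) => [q1|u1]; case: (rho y2) => [q2|u2] // [->].
- by case: (rho y1).
- by case: (rho y2).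
- by case=> /(swap_inj adj_sym) ->.
Qed.

Lemma bdIsl_Some (e : E) u : bdIsl e = Some u -> e = bd_arc u.
Proof. by case: e => [[p|v]|p] //= [->]. Qed.

Lemma mem_bverts u0 w : (w \in bverts u0) = (bd_arc w \in face u0).
Proof. by apply: can2_mem_pmap => [[[p|v]|p]|]. Qed.

Lemma size_face u0 : size (face u0) = fingraph.order sigma (bd_arc u0).
Proof. exact: size_orbit. Qed.

Lemma nth_face u0 k : k < size (face u0) ->
  nth (bd_arc u0) (face u0) k = iter k sigma (bd_arc u0).
Proof. by rewrite size_face => ltk; rewrite /face /orbit nth_traject. Qed.

Lemma sigma_nth_face u0 k : k.+1 < size (face u0) ->
  sigma (nth (bd_arc u0) (face u0) k) = nth (bd_arc u0) (face u0) k.+1.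
Proof. by move=> ltk; rewrite !nth_face // ltnW. Qed.

Lemma sigma_last_face u0 :
  sigma (nth (bd_arc u0) (face u0) (size (face u0)).-1) = bd_arc u0.
Proof.
have order_gt0 := fingraph.order_gt0 sigma (bd_arc u0).
rewrite nth_face ?size_face ?prednK //.
by rewrite -iterS prednK // (iter_order sigma_inj).
Qed.

Lemma face_cons u0 : face u0 = bd_arc u0 :: behead (face u0).
Proof.
by rewrite /face /orbit; case: fingraph.order (fingraph.order_gt0 sigma (bd_arc u0)).
Qed.

Lemma nth_bverts0 u0 : nth u0 (bverts u0) 0 = u0.
Proof. by rewrite /bverts face_cons. Qed.

Lemma bverts_partition u0 : u0 \in bverts u0 /\ uniq (bverts u0) /\
  (forall v, v \in bverts u0 -> bverts v =i bverts u0).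
Proof.
split; first by rewrite mem_bverts face_cons mem_head.
split; first by apply: pmap_uniq (orbit_uniq _ _) => -[[p|v]|p].
move=> v; rewrite mem_bverts /face -fconnect_orbit => u0v w.
rewrite !mem_bverts /face -!fconnect_orbit.
apply/idP/idP => [vw|u0w]; first exact: connect_trans u0v vw.
by apply: connect_trans u0w; rewrite fconnect_sym //; exact: sigma_inj.
Qed.

Lemma size_bpos u0 : size (bpos u0) = kappa u0.
Proof. exact: size_some_pos. Qed.

Lemma nth_face_bpos u0 m : m < kappa u0 ->
  nth (bd_arc u0) (face u0) (nth 0 (bpos u0) m) = bd_arc (nth u0 (bverts u0) m).
Proof. by move=> ltm; apply: bdIsl_Some; apply: nth_some_pos; rewrite size_bpos. Qed.

Lemma sigma_segment_end u0 m : m < kappa u0 ->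
  sigma (nth (bd_arc u0) (face u0) (nth (size (face u0)) (bpos u0) m.+1).-1) =
  bd_arc (nth u0 (bverts u0) (m.+1 %% kappa u0)).
Proof.
move=> ltm; have ltm' : m < size (bpos u0) by rewrite size_bpos.
have p_lt_q : nth 0 (bpos u0) m < nth (size (face u0)) (bpos u0) m.+1.
  exact: nth_some_pos_ltS.
have [ltm1|lem1] := ltnP m.+1 (kappa u0).
  have ltm1' : m.+1 < size (bpos u0) by rewrite size_bpos.
  rewrite (set_nth_default 0) // in p_lt_q *.
  have q_lt : nth 0 (bpos u0) m.+1 < size (face u0) by exact: some_pos_lt.
  rewrite modn_small // sigma_nth_face prednK ?nth_face_bpos //; lia.
rewrite [nth (size _) _ _]nth_default ?size_bpos //.
have -> : m.+1 = kappa u0 by lia.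
by rewrite modnn nth_bverts0 sigma_last_face.
Qed.

End Faces.

Section Transfer.
Variables (R : realType) (V : finType) (adj : rel V) (dV : {set V}).
Variables (rho : {perm BV adj dV}) (a b c d : R[i]).
Hypothesis adj_sym : symmetric adj.
Hypothesis unitaryH : unitary2 (Hmx a b c d).
Hypothesis d_real : d \is Num.real.
Hypothesis b_neq0 : b != 0.
Variables (phi : barc adj dV -> R[i]) (al : BD dV -> R[i]).
Hypothesis phi_stat : step rho a b c d phi al = phi.
Local Notation C := R[i].
Local Notation E := (barc adj dV).
Local Notation om := (- \det (Hmx a b c d)).
Local Notation sigma := (sigma rho).
Local Notation face := (face rho).
Local Notation bverts := (bverts rho).
Local Notation kappa := (kappa rho).
Local Notation bpos := (bpos rho).
Local Notation isl_in := (isl_in rho).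

Definition face_amp (e : E) : C :=
  match e with inl y => phi (inl y) | inr p => om * isl_in phi (inl p) end.

Lemma face_amp_sigma (e : E) : bdIsl (sigma e) = None ->
  face_amp (sigma e) = om ^+ @isBr V adj dV (sigma e) * face_amp e.
Proof.
case: e => [y|p] /=.
  by case rho_y: (rho y) => [q|u] //= _; rewrite expr1 /isl_in -rho_y permK.
move=> _; rewrite expr0 mul1r.
have stat e : step rho a b c d phi al e = phi e by rewrite phi_stat.
have bridge : phi (inr p) - d * phi (inr (swap p)) = c * isl_in phi (inl p).
  by rewrite -stat /= addrK.
have bridge' : phi (inr (swap p)) - d * phi (inr p) = c * isl_in phi (inl (swap p)).
  by rewrite -stat /= swapK // addrK.
have k_neq0 : 1 - d ^+ 2 != 0.
  by rewrite (one_sub_d2 unitaryH d_real) -normCK expf_neq0 // normr_eq0.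
rewrite -stat /= swapK //; apply: (mulIf k_neq0).
transitivity (a * (1 - d ^+ 2) * isl_in phi (inl (swap p))
              + b * (phi (inr p) - d * phi (inr (swap p)))
              + b * d * (phi (inr (swap p)) - d * phi (inr p))); first ring.
rewrite bridge bridge' (a_mul_one_sub_d2 unitaryH d_real).
rewrite -[in RHS]mulrAC (om_mul_one_sub_d2 unitaryH d_real).
ring.
Qed.

Lemma sigma_eq_bd_arc (e : E) x : sigma e = bd_arc x -> e = inl (rho^-1 (inr x))%g.
Proof. by case: e => [y|p] //=; case rho_y: (rho y) => [q|u] //= [<-]; rewrite -rho_y permK. Qed.

Lemma face_amp_segment u0 m t : (m < kappa u0)%N ->
  let p := nth 0 (bpos u0) m in
  (p + t < nth (size (face u0)) (bpos u0) m.+1)%N ->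
  face_amp (nth (bd_arc u0) (face u0) (p + t)) =
    om ^+ count (@isBr V adj dV) (drop p (take (p + t).+1 (face u0)))
    * face_amp (nth (bd_arc u0) (face u0) p).
Proof.
move=> ltm p; have ltm' : (m < size (bpos u0))%N by rewrite size_bpos.
have lt_p : (p < size (face u0))%N by exact: some_pos_lt.
have le_q : (nth (size (face u0)) (bpos u0) m.+1 <= size (face u0))%N.
  exact: nth_some_pos_le.
have gap k : (p < k < nth (size (face u0)) (bpos u0) m.+1)%N ->
    bdIsl (nth (bd_arc u0) (face u0) k) = None by exact: some_pos_gap.
elim: t => [|t IHt] lt_pt.
  have le_p : (p <= size (face u0))%N by exact: ltnW.
  rewrite addn0 (take_nth (bd_arc u0)) // drop_rcons ?size_takel //.
  by rewrite drop_oversize ?size_takel //= nth_face_bpos //= expr0 mul1r.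
rewrite addnS -sigma_nth_face; last by lia.
rewrite face_amp_sigma; last first.
  by rewrite sigma_nth_face; [apply: gap; apply/andP; split | ]; lia.
rewrite IHt; last by lia.
rewrite sigma_nth_face; last by lia.
rewrite (take_nth (bd_arc u0) (n := (p + t).+1)); last by lia.
rewrite drop_rcons ?size_takel; try lia.
by rewrite -cats1 count_cat /= addn0 exprD mulrCA mulrA.
Qed.

Lemma face_transfer u0 m : (m < kappa u0)%N ->
  isl_in phi (inr (nth u0 (bverts u0) (m.+1 %% kappa u0))) =
  om ^+ delta rho u0 m * (a * isl_in phi (inr (nth u0 (bverts u0) m))
                          + b * al (nth u0 (bverts u0) m)).
Proof.
move=> ltm; have ltm' : (m < size (bpos u0))%N by rewrite size_bpos.
set p := nth 0 (bpos u0) m; set q := nth (size (face u0)) (bpos u0) m.+1.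
have lt_pq : (p < q)%N by exact: nth_some_pos_ltS.
have := face_amp_segment (t := (q.-1 - p)%N) ltm; rewrite /= -/p.
have -> : (p + (q.-1 - p) = q.-1)%N by lia.
move=> /(_ ltac:(lia)); rewrite prednK; last by lia.
rewrite (sigma_eq_bd_arc (sigma_segment_end adj_sym ltm)) nth_face_bpos //=.
have stat_m := congr1 (fun f => f (bd_arc (nth u0 (bverts u0) m))) phi_stat.
by rewrite /isl_in => ->; rewrite -stat_m.
Qed.

End Transfer.

Section FaceMatrix.
Variables (R : realType) (V : finType) (adj : rel V) (dV : {set V}).
Variables (rho : {perm BV adj dV}) (u0 : BD dV) (om : R[i]).
Local Notation kappa := (kappa rho u0).

Lemma Pf_monomial (j i : 'I_kappa) : i != ord_pred j -> Pf rho u0 om j i = 0.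
Proof. by move=> neq_i; rewrite mxE /= -val_ord_pred ifN. Qed.

Lemma Pf_ord_pred (j : 'I_kappa) :
  Pf rho u0 om j (ord_pred j) = om ^+ delta rho u0 (ord_pred j).
Proof. by rewrite mxE /= -val_ord_pred eqxx. Qed.

End FaceMatrix.

Section Scattering.
Variables (R : realType) (V : finType) (adj : rel V) (dV : {set V}).
Variables (rho : {perm BV adj dV}) (a b c d : R[i]).
Hypothesis adj_sym : symmetric adj.
Hypothesis unitaryH : unitary2 (Hmx a b c d).
Hypothesis d_real : d \is Num.real.
Hypothesis b_neq0 : b != 0.
Local Notation om := (- \det (Hmx a b c d)).

Lemma out_step_face (phi : barc adj dV -> R[i]) (al : BD dV -> R[i]) u0 :
  step rho a b c d phi al = phi -> (1%:M - a *: Pf rho u0 om) \in unitmx ->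
  forall j : 'I_(kappa rho u0),
  out_step rho c d phi al (nth u0 (bverts rho u0) j) =
  \sum_(i < kappa rho u0) Sf rho u0 a b c d om j i * al (nth u0 (bverts rho u0) i).
Proof.
move=> phi_stat Q_unit j.
pose x i := nth u0 (bverts rho u0) i.
pose h : 'cV[R[i]]_(kappa rho u0) := \col_i isl_in rho phi (inr (x i)).
pose alv : 'cV[R[i]]_(kappa rho u0) := \col_i al (x i).
have h_def : h = Pf rho u0 om *m (a *: h + b *: alv).
  apply/matrixP => k l; rewrite (ord1 l) (mulmx_monomial (@Pf_monomial _ _ _ _ _ _ _)).
  rewrite Pf_ord_pred !mxE -(face_transfer adj_sym unitaryH d_real b_neq0 phi_stat) //.
  by rewrite -[in LHS](ord_predK k).
transitivity ((Sf rho u0 a b c d om *m alv) j 0).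
  by rewrite /Sf (scattering_mx c d Q_unit h_def) !mxE.
by rewrite mxE; apply: eq_bigr => i _; rewrite [alv _ _]mxE.
Qed.

End Scattering.

Unset Implicit Arguments.

Theorem mainTheorem2 (R : realType) (V : finType) (adj : rel V) (dV : {set V})
    (rho : {perm BV adj dV}) (a b c d : R[i]) :
  simple_connected_graph adj ->
  rotation rho ->
  unitary2 (Hmx a b c d) ->
  a * b * c * d != 0 ->
  d \is Num.real ->
  let om := - \det (Hmx a b c d) in
  (* the vertex sets of the external facial walks partition delta V^BU *)
  (forall u0 : BD dV, u0 \in bverts rho u0 /\ uniq (bverts rho u0) /\
     (forall v, v \in bverts rho u0 -> bverts rho v =i bverts rho u0)) /\
  (* I_f - a P_f(om) is invertible *)
  (forall u0 : BD dV, (1%:M - a *: Pf rho u0 om) \in unitmx) /\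
  (* the scattering matrix is the direct sum of the S_f *)
  (forall (alpha : BD dV -> R[i]) (u0 : BD dV) (j : 'I_(kappa rho u0)),
     cvgC (outflow_at rho a b c d alpha (nth u0 (bverts rho u0) j))
          (\sum_(i < kappa rho u0)
              Sf rho u0 a b c d om j i * alpha (nth u0 (bverts rho u0) i))).
Proof.
move=> [adj_sym _ _] _ unitaryH abcd_neq0 d_real om.
have [b_neq0 c_neq0] : b != 0 /\ c != 0.
  by move: abcd_neq0; rewrite !mulf_eq0 !negb_or => /andP [/andP [/andP [_ ->] ->] _].
have Pf_unit u0 : (1%:M - a *: Pf rho u0 om) \in unitmx.
  apply: (unitmx_1_sub_monomial (g := @ord_pred _)) => [|j i|j].
  - exact: norm_a_lt1 unitaryH c_neq0.
  - exact: Pf_monomial.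
  - by rewrite Pf_ord_pred normrX normrN norm_det_Hmx // expr1n.
split; first exact: bverts_partition.
split=> // al u0 j.
have [phi phi_stat] := stationary_exists rho adj_sym unitaryH al.
rewrite -(out_step_face adj_sym unitaryH d_real b_neq0 phi_stat (Pf_unit u0)).
exact: outflow_at_cvg.
Qed.
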